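(* Let $G=(V,E)$ with colouring $f$ satisfy $|B|>|R|$. Let $G^a=(V,E^a_0)$ be obtained from $G$ by deleting all edges with both ends red, and $G^r=(V,E^r_0)$ be obtained from $G$ by adding all non-edges with both ends blue. Let $E^a$ be an optimal solution to MIAE on $(G^a,f)$ and $E^r$ an optimal solution to MIRE on $(G^r,f)$, and put $A=E^a\setminus E^a_0$ (added edges) and $D=E^r_0\setminus E^r$ (removed edges). Then $E'=(E\setminus D)\cup A$ is an optimal solution to MIE on $(G,f)$, and the optimal MIE cost on $(G,f)$ equals $|A|+|D|$.
   Context: Graphs are finite, simple and undirected; $B,R$ are the blue and red nodes under $f:V\to\{B,R\}$. A node is under (majority) illusion in $(V,E')$ if it has strictly more red than blue neighbours there. An optimal solution to MIAE on $(H=(V,F_0),f)$ is an edge set $F\supseteq F_0$ with no node under illusion in $(V,F)$ and $|F\setminus F_0|$ minimum; an optimal solution to MIRE is $F\subseteq F_0$ with no node under illusion and $|F_0\setminus F|$ minimum; an optimal solution to MIE is any edge set $F$ on $V$ with no node under illusion and $|F_0\setminus F|+|F\setminus F_0|$ minimum. *)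

From mathcomp Require Import all_boot.
Set Implicit Arguments. Unset Strict Implicit. Unset Printing Implicit Defensive.

(* Vertices: a finite type V.  Colouring f : V -> bool, with
   f v = true  <-> v is blue (v in B),  f v = false <-> v is red (v in R).
   An edge set on V is a set of 2-element subsets of V. *)

Definition edge_set (V : finType) (F : {set {set V}}) : Prop :=
  forall e, e \in F -> #|e| = 2.

Definition blue_nb (V : finType) (f : V -> bool) (F : {set {set V}}) (v : V) : nat :=
  #|[set u | ([set u; v] \in F) && f u]|.

Definition red_nb (V : finType) (f : V -> bool) (F : {set {set V}}) (v : V) : nat :=
  #|[set u | ([set u; v] \in F) && ~~ f u]|.

Definition under_illusion (V : finType) (f : V -> bool) (F : {set {set V}}) (v : V) : Prop :=
  blue_nb f F v < red_nb f F v.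

Definition no_illusion (V : finType) (f : V -> bool) (F : {set {set V}}) : Prop :=
  forall v, ~ under_illusion f F v.

Definition MIAE_opt (V : finType) (f : V -> bool) (F0 F : {set {set V}}) : Prop :=
  [/\ edge_set F, F0 \subset F, no_illusion f F &
      forall F' : {set {set V}}, edge_set F' -> F0 \subset F' -> no_illusion f F' ->
        #|F :\: F0| <= #|F' :\: F0| ].

Definition MIRE_opt (V : finType) (f : V -> bool) (F0 F : {set {set V}}) : Prop :=
  [/\ F \subset F0, no_illusion f F &
      forall F' : {set {set V}}, F' \subset F0 -> no_illusion f F' ->
        #|F0 :\: F| <= #|F0 :\: F'| ].

Definition MIE_cost (V : finType) (F0 F : {set {set V}}) : nat :=
  #|F0 :\: F| + #|F :\: F0|.

Definition MIE_opt (V : finType) (f : V -> bool) (F0 F : {set {set V}}) : Prop :=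
  [/\ edge_set F, no_illusion f F &
      forall F' : {set {set V}}, edge_set F' -> no_illusion f F' ->
        MIE_cost F0 F <= MIE_cost F0 F' ].

Definition del_red_edges (V : finType) (f : V -> bool) (E : {set {set V}}) : {set {set V}} :=
  [set e in E | ~~ [forall x in e, ~~ f x]].

Definition add_blue_edges (V : finType) (f : V -> bool) (E : {set {set V}}) : {set {set V}} :=
  E :|: [set e : {set V} | (#|e| == 2) && [forall x in e, f x]].

From mathcomp Require Import all_boot zify.
Set Implicit Arguments. Unset Strict Implicit. Unset Printing Implicit Defensive.

(* Call a change to E well placed if it deletes a red-red edge or adds a
   blue-blue one.  An illusion-free F can be made well placed without raising
   its cost: undo one misplaced change; if that puts a vertex under illusion,
   repair it with one well-placed change at that vertex (a new blue-blue edge,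
   which exists because |B| > |R|, or a deleted red-red edge).  A red vertex
   only sees non-blue pairs and a blue vertex only sees non-red pairs, so for a
   well-placed F the sets F \ E and E \ F are feasible for MIAE on G^a and for
   MIRE on G^r respectively, whence |A| <= |F \ E| and |D| <= |E \ F|.  The
   same argument shows that A consists of blue-blue and D of red-red pairs, so
   (E \ D) u A is illusion-free of cost exactly |A| + |D|. *)

Lemma forall_in_set2 (T : finType) (P : pred T) (a b : T) :
  [forall x in [set a; b], P x] = P a && P b.
Proof.
apply/forall_inP/andP => [H|[Pa Pb] x]; first by split; apply: H; rewrite !inE eqxx ?orbT.
by rewrite !inE => /orP[]/eqP->.
Qed.

Section Illusion.

Variables (V : finType) (f : V -> bool).
Implicit Types (E F : {set {set V}}) (e : {set V}) (P : pred V) (a b u w x y : V).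

Definition blue_pair e := [forall x in e, f x].
Definition red_pair e := [forall x in e, ~~ f x].

Lemma blue_pair2 a b : blue_pair [set a; b] = f a && f b.
Proof. exact: forall_in_set2. Qed.

Lemma red_pair2 a b : red_pair [set a; b] = ~~ f a && ~~ f b.
Proof. exact: (forall_in_set2 (fun x => ~~ f x)). Qed.

Lemma blue_pair_not_red e : #|e| = 2 -> blue_pair e -> red_pair e = false.
Proof.
move=> e2 /forall_inP eB; apply/negbTE/forall_inPn.
have /card_gt0P[x xe] : 0 < #|e| by rewrite e2.
by exists x; rewrite ?negbK ?eB.
Qed.

Lemma in_del_red_edges E e : (e \in del_red_edges f E) = (e \in E) && ~~ red_pair e.
Proof. by rewrite inE. Qed.

Lemma in_add_blue_edges E e :
  (e \in add_blue_edges f E) = (e \in E) || (#|e| == 2) && blue_pair e.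
Proof. by rewrite !inE. Qed.

Lemma not_under_illusion_mono F F' x :
  (forall y, f y -> [set y; x] \in F -> [set y; x] \in F') ->
  (forall y, ~~ f y -> [set y; x] \in F' -> [set y; x] \in F) ->
  ~ under_illusion f F x -> ~ under_illusion f F' x.
Proof.
move=> sub_blue sub_red free_x ill_x; apply: free_x.
rewrite /under_illusion /blue_nb /red_nb in ill_x *.
apply: (leq_trans _ (leq_trans ill_x _)); first rewrite ltnS.
all: apply/subset_leq_card/subsetP => y; rewrite !inE => /andP[yx fy].
  by rewrite fy sub_blue.
by rewrite fy sub_red.
Qed.

Lemma not_under_illusion_mono_blue F F' x : f x ->
  (forall e, blue_pair e -> e \in F -> e \in F') ->
  (forall e, ~~ blue_pair e -> ~~ red_pair e -> e \in F' -> e \in F) ->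
  ~ under_illusion f F x -> ~ under_illusion f F' x.
Proof.
move=> fx sub_blue sub_mixed; apply: not_under_illusion_mono => y fy.
  by apply: sub_blue; rewrite blue_pair2 fy fx.
by apply: sub_mixed; rewrite ?blue_pair2 ?red_pair2 (negbTE fy) fx.
Qed.

Lemma not_under_illusion_mono_red F F' x : ~~ f x ->
  (forall e, ~~ blue_pair e -> ~~ red_pair e -> e \in F -> e \in F') ->
  (forall e, red_pair e -> e \in F' -> e \in F) ->
  ~ under_illusion f F x -> ~ under_illusion f F' x.
Proof.
move=> fx sub_mixed sub_red; apply: not_under_illusion_mono => y fy.
  by apply: sub_mixed; rewrite ?blue_pair2 ?red_pair2 fy (negbTE fx).
by apply: sub_red; rewrite red_pair2 fy fx.
Qed.

Lemma not_under_illusion_no_red_pair F x : ~~ f x ->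
  (forall e, e \in F -> ~~ red_pair e) -> ~ under_illusion f F x.
Proof.
move=> fx no_red; rewrite /under_illusion /red_nb.
suff -> : [set u | ([set u; x] \in F) && ~~ f u] = set0 by rewrite cards0.
apply/setP => y; rewrite !inE; apply/andP => -[/no_red].
by rewrite red_pair2 fx andbT => /negP.
Qed.

Lemma not_under_illusion_add_blue_pair F a b x : f a -> f b ->
  ~ under_illusion f F x -> ~ under_illusion f ([set a; b] |: F) x.
Proof.
move=> fa fb; apply: not_under_illusion_mono => y fy; first by rewrite in_setU1 orbC => ->.
rewrite in_setU1 => /orP[/eqP yx_ab|//].
have := set21 y x; rewrite yx_ab in_set2 => /orP[]/eqP ya.
all: by move: fy; rewrite ya ?fa ?fb.
Qed.

Lemma not_under_illusion_del_red_pair F a b x : ~~ f a -> ~~ f b ->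
  ~ under_illusion f F x -> ~ under_illusion f (F :\ [set a; b]) x.
Proof.
move=> fa fb; apply: not_under_illusion_mono => y fy; last by rewrite inE => /andP[].
rewrite !inE => ->; rewrite andbT; apply/eqP => yx_ab.
have := set21 y x; rewrite yx_ab in_set2 => /orP[]/eqP ya.
all: by move: fy; rewrite ya ?(negbTE fa) ?(negbTE fb).
Qed.

Lemma not_under_illusion_setU1 F a b x : f a -> x != a ->
  ~ under_illusion f F x -> ~ under_illusion f ([set a; b] |: F) x.
Proof.
move=> fa xa; apply: not_under_illusion_mono => y fy; first by rewrite in_setU1 orbC => ->.
rewrite in_setU1 => /orP[/eqP yx_ab|//].
have := set21 a b; rewrite -yx_ab in_set2 [a == x]eq_sym (negbTE xa) orbF => /eqP ay.
by move: fy; rewrite -ay fa.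
Qed.

Lemma not_under_illusion_setD1 F a b x : ~~ f a -> x != a ->
  ~ under_illusion f F x -> ~ under_illusion f (F :\ [set a; b]) x.
Proof.
move=> fa xa; apply: not_under_illusion_mono => y fy; last by rewrite inE => /andP[].
rewrite !inE => ->; rewrite andbT; apply/eqP => yx_ab.
have := set21 a b; rewrite -yx_ab in_set2 [a == x]eq_sym (negbTE xa) orbF => /eqP ay.
by move: fy; rewrite -ay (negbTE fa).
Qed.

Lemma card_nb_setU1 P F u w : w != u -> [set u; w] \notin F ->
  #|[set y | ([set y; u] \in [set u; w] |: F) && P y]| =
  #|[set y | ([set y; u] \in F) && P y]| + P w.
Proof.
move=> wu uwF; set S := [set y | ([set y; u] \in F) && P y].
have eq_yu_uw y : ([set y; u] == [set u; w]) = (y == w).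
  apply/eqP/eqP => [yu_uw|->]; last exact: setUC.
  by have := set22 u w; rewrite -yu_uw in_set2 (negbTE wu) orbF => /eqP.
have wS : w \notin S by rewrite inE setUC (negbTE uwF).
case Pw: (P w).
- rewrite addn1 -add1n -[1]/(nat_of_bool true) -wS -cardsU1.
  apply: eq_card => y; rewrite !inE eq_yu_uw.
  by case: eqVneq => [->|] //=; rewrite Pw.
- rewrite addn0; apply: eq_card => y; rewrite !inE eq_yu_uw.
  by case: eqVneq => [->|] //=; rewrite Pw !andbF.
Qed.

Lemma nb_setU1 F u w : w != u -> [set u; w] \notin F ->
  blue_nb f ([set u; w] |: F) u = blue_nb f F u + f w /\
  red_nb f ([set u; w] |: F) u = red_nb f F u + ~~ f w.
Proof.
by move=> wu uwF; split; [apply: card_nb_setU1 | apply: (card_nb_setU1 (fun y => ~~ f y))].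
Qed.

Lemma nb_setD1 F u w : w != u -> [set u; w] \in F ->
  blue_nb f F u = blue_nb f (F :\ [set u; w]) u + f w /\
  red_nb f F u = red_nb f (F :\ [set u; w]) u + ~~ f w.
Proof.
move=> wu uwF; have := @nb_setU1 (F :\ [set u; w]) u w wu.
by rewrite setD1K //; apply; rewrite !inE eqxx.
Qed.

Definition changes (Q : pred {set V}) E F := [set e | Q e && ((e \in F) != (e \in E))].

Lemma MIE_cost_changes E F : MIE_cost E F = #|changes predT E F|.
Proof.
rewrite /MIE_cost -cardsUI.
have -> : (E :\: F) :&: (F :\: E) = set0.
  by apply/setP => e; rewrite !inE; case: (e \in E); case: (e \in F).
rewrite cards0 addn0; apply: eq_card => e; rewrite !inE.
by case: (e \in E); case: (e \in F).
Qed.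

Lemma card_changes_toggle Q E F F' e : (forall e', e' != e -> (e' \in F') = (e' \in F)) ->
  #|changes Q E F'| + (e \in changes Q E F) = #|changes Q E F| + (e \in changes Q E F').
Proof.
move=> F'F; rewrite (cardsD1 e (changes Q E F')) (cardsD1 e (changes Q E F)).
have -> : changes Q E F' :\ e = changes Q E F :\ e.
  by apply/setP => e'; rewrite !inE; case: eqVneq => //= e'e; rewrite F'F.
lia.
Qed.

Lemma card_changes_setU1 Q E F e : e \notin F ->
  #|changes Q E (e |: F)| + (Q e && (e \in E)) = #|changes Q E F| + (Q e && (e \notin E)).
Proof.
move=> eF.
have F'F e' : e' != e -> (e' \in e |: F) = (e' \in F) by move=> /negbTE e'e; rewrite !inE e'e.
have := card_changes_toggle Q E F'F; rewrite !inE eqxx (negbTE eF).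
by case: (e \in E); case: (Q e) => /=; lia.
Qed.

Lemma card_changes_setD1 Q E F e : e \in F ->
  #|changes Q E (F :\ e)| + (Q e && (e \notin E)) = #|changes Q E F| + (Q e && (e \in E)).
Proof.
move=> eF.
have F'F e' : e' != e -> (e' \in F :\ e) = (e' \in F) by move=> e'e; rewrite !inE e'e.
have := card_changes_toggle Q E F'F; rewrite !inE eqxx eF.
by case: (e \in E); case: (Q e) => /=; lia.
Qed.

Lemma MIE_cost_setU1 E F e : e \notin F ->
  MIE_cost E (e |: F) + (e \in E) = MIE_cost E F + (e \notin E).
Proof. by rewrite !MIE_cost_changes; apply: card_changes_setU1. Qed.

Lemma MIE_cost_setD1 E F e : e \in F ->
  MIE_cost E (F :\ e) + (e \notin E) = MIE_cost E F + (e \in E).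
Proof. by rewrite !MIE_cost_changes; apply: card_changes_setD1. Qed.

(* Only meaningful for e in the symmetric difference of E and the new edge set. *)
Definition misplaced E e := if e \in E then ~~ red_pair e else ~~ blue_pair e.

Definition improvement E F F' := [/\ edge_set F', no_illusion f F',
  MIE_cost E F' <= MIE_cost E F &
  #|changes (misplaced E) E F'| < #|changes (misplaced E) E F|].

Definition well_placed E F :=
  (forall e, e \in E :\: F -> red_pair e) /\ (forall e, e \in F :\: E -> blue_pair e).

Hypothesis more_blue : #|[set v | ~~ f v]| < #|[set v | f v]|.

Lemma not_under_illusion_blue_clique F x : f x ->
  (forall e, #|e| = 2 -> blue_pair e -> e \in F) -> ~ under_illusion f F x.
Proof.
move=> fx blue_in; apply/negP; rewrite -leqNgt.
have red_le : red_nb f F x <= #|[set v | ~~ f v]|.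
  by apply/subset_leq_card/subsetP => y; rewrite !inE => /andP[].
have blue_ge : #|[set v | f v] :\ x| <= blue_nb f F x.
  apply/subset_leq_card/subsetP => y; rewrite !inE => /andP[yx fy].
  by rewrite fy blue_in ?cards2 ?yx ?blue_pair2 ?fy ?fx.
have := cardsD1 x [set v | f v]; rewrite inE fx; lia.
Qed.

Lemma exists_blue_non_neighbour F a : blue_nb f F a < red_nb f F a ->
  exists2 w, f w && (w != a) & [set a; w] \notin F.
Proof.
move=> ill_a.
have : ~~ ([set v | f v] :\ a \subset [set y | ([set y; a] \in F) && f y]).
  apply/negP => /subset_leq_card blue_le.
  have red_le : red_nb f F a <= #|[set v | ~~ f v]|.
    by apply/subset_leq_card/subsetP => y; rewrite !inE => /andP[].
  have := cardsD1 a [set v | f v]; rewrite /blue_nb in ill_a; lia.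
case/subsetPn => w; rewrite !inE => /andP[wa fw]; rewrite fw andbT setUC => wF.
by exists w; rewrite ?fw.
Qed.

Variable E : {set {set V}}.
Hypothesis edge_E : edge_set E.

Lemma improvement_add F a b : edge_set F -> no_illusion f F -> a != b -> f a ->
  [set a; b] \in E -> [set a; b] \notin F -> exists F', improvement E F F'.
Proof.
move=> edge_F free_F ab fa abE abF; set F1 := [set a; b] |: F.
have edge_F1 : edge_set F1.
  by move=> e; rewrite in_setU1 => /orP[/eqP->|/edge_F]; rewrite // cards2 ab.
have mis_ab : misplaced E [set a; b] by rewrite /misplaced abE red_pair2 fa.
have := MIE_cost_setU1 E abF; rewrite abE -/F1 => cost1.
have := card_changes_setU1 (misplaced E) E abF; rewrite mis_ab abE -/F1 => mis1.
have free_F1 x : x != a -> ~ under_illusion f F1 x.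
  by move=> xa; apply: not_under_illusion_setU1 (free_F x).
have [ill_a | free_a] := boolP (blue_nb f F1 a < red_nb f F1 a); last first.
  exists F1; split => //; [|by clear - cost1; lia | by clear - mis1; lia].
  by move=> x; case: (eqVneq x a) => [->|/free_F1//]; apply/negP.
(* Only a may have gained a red neighbour; give it one more blue neighbour. *)
have [w /andP[fw wa] awF1] := exists_blue_non_neighbour ill_a.
exists ([set a; w] |: F1); split.
- by move=> e; rewrite in_setU1 => /orP[/eqP->|/edge_F1]; rewrite // cards2 eq_sym wa.
- move=> x; case: (eqVneq x a) => [->|xa]; last first.
    exact: not_under_illusion_add_blue_pair (free_F1 x xa).
  have ba : b != a by rewrite eq_sym.
  have [blue1 red1] := nb_setU1 ba abF; rewrite -/F1 in blue1 red1.
  have [blue2 red2] := nb_setU1 wa awF1; rewrite fw in blue2 red2.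
  have := free_F a; rewrite /under_illusion; clear - blue1 red1 blue2 red2; lia.
- by have := MIE_cost_setU1 E awF1; clear - cost1; lia.
- have mis_aw : misplaced E [set a; w] = ([set a; w] \in E).
    by rewrite /misplaced red_pair2 blue_pair2 fa fw; case: (_ \in E).
  have := card_changes_setU1 (misplaced E) E awF1; rewrite mis_aw.
  by case: ([set a; w] \in E); clear - mis1; lia.
Qed.

Lemma improvement_remove F a b : edge_set F -> no_illusion f F -> ~~ f a ->
  [set a; b] \notin E -> [set a; b] \in F -> exists F', improvement E F F'.
Proof.
move=> edge_F free_F fa abE abF; set F1 := F :\ [set a; b].
have ba : b != a by have := edge_F _ abF; rewrite cards2 eq_sym; case: eqVneq.
have edge_F1 : edge_set F1 by move=> e /setD1P[_ /edge_F].
have mis_ab : misplaced E [set a; b] by rewrite /misplaced (negbTE abE) blue_pair2 (negbTE fa).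
have := MIE_cost_setD1 E abF; rewrite (negbTE abE) -/F1 => cost1.
have := card_changes_setD1 (misplaced E) E abF; rewrite mis_ab (negbTE abE) -/F1 => mis1.
have free_F1 x : x != a -> ~ under_illusion f F1 x.
  by move=> xa; apply: not_under_illusion_setD1 (free_F x).
have [ill_a | free_a] := boolP (blue_nb f F1 a < red_nb f F1 a); last first.
  exists F1; split => //; [|by clear - cost1; lia | by clear - mis1; lia].
  by move=> x; case: (eqVneq x a) => [->|/free_F1//]; apply/negP.
(* Only a may have lost a blue neighbour; take one red neighbour away. *)
have /card_gt0P[w] : 0 < red_nb f F1 a by apply: leq_ltn_trans ill_a.
rewrite inE setUC => /andP[awF1 fw].
have wa : w != a by have := edge_F1 _ awF1; rewrite cards2 eq_sym; case: eqVneq.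
exists (F1 :\ [set a; w]); split.
- by move=> e /setD1P[_ /edge_F1].
- move=> x; case: (eqVneq x a) => [->|xa]; last first.
    exact: not_under_illusion_del_red_pair (free_F1 x xa).
  have [blue1 red1] := nb_setD1 ba abF; rewrite -/F1 in blue1 red1.
  have [blue2 red2] := nb_setD1 wa awF1; rewrite (negbTE fw) in blue2 red2.
  have := free_F a; rewrite /under_illusion; clear - blue1 red1 blue2 red2; lia.
- by have := MIE_cost_setD1 E awF1; clear - cost1; lia.
- have mis_aw : misplaced E [set a; w] = ([set a; w] \notin E).
    by rewrite /misplaced red_pair2 blue_pair2 (negbTE fa) (negbTE fw); case: (_ \in E).
  have := card_changes_setD1 (misplaced E) E awF1; rewrite mis_aw.
  by case: ([set a; w] \in E); clear - mis1; lia.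
Qed.

Lemma improvement_exists F : edge_set F -> no_illusion f F ->
  0 < #|changes (misplaced E) E F| -> exists F', improvement E F F'.
Proof.
move=> edge_F free_F /card_gt0P[e]; rewrite inE andbC /misplaced.
case eF: (e \in F); case eE: (e \in E) => //= mis_e.
- have /eqP/cards2P[a [b [ab e_ab]]] := edge_F e eF; subst e.
  move: mis_e; rewrite blue_pair2 negb_and => /orP[fa|fb].
    by apply: (improvement_remove (b := b) edge_F free_F fa); rewrite ?eE ?eF.
  by apply: (improvement_remove (b := a) edge_F free_F fb); rewrite setUC ?eE ?eF.
- have /eqP/cards2P[a [b [ab e_ab]]] := edge_E eE; subst e.
  move: mis_e; rewrite red_pair2 negb_and !negbK => /orP[fa|fb].
    by apply: (improvement_add (b := b) edge_F free_F ab fa); rewrite ?eE ?eF.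
  by apply: (improvement_add (b := a) edge_F free_F _ fb); rewrite 1?eq_sym // setUC ?eE ?eF.
Qed.

Lemma well_placed_exists F : edge_set F -> no_illusion f F ->
  exists2 F', [/\ edge_set F', no_illusion f F' & MIE_cost E F' <= MIE_cost E F] & well_placed E F'.
Proof.
have [n] := ubnP #|changes (misplaced E) E F|.
elim: n F => // n IH F lt_n edge_F free_F.
have [no_mis | /improvement_exists[] // F1 [edge_F1 free_F1 cost1 mis1]] :=
  posnP #|changes (misplaced E) E F|.
  exists F; first by split.
  have no_mis_e e : e \in changes (misplaced E) E F -> False by rewrite (cards0_eq no_mis) inE.
  split=> e; rewrite inE => /andP[eF eE]; apply/negPn/negP => mis_e; apply: (no_mis_e e).
    by rewrite inE /misplaced eE (negbTE eF) mis_e.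
  by rewrite inE /misplaced (negbTE eF) eE mis_e.
have [F2 [edge_F2 free_F2 cost2] well_placed_F2] := IH F1 (leq_trans mis1 lt_n) edge_F1 free_F1.
by exists F2 => //; split => //; apply: leq_trans cost1.
Qed.

Section Combination.

Variables Ea Er : {set {set V}}.
Hypothesis opt_a : MIAE_opt f (del_red_edges f E) Ea.
Hypothesis opt_r : MIRE_opt f (add_blue_edges f E) Er.

Local Notation Ea0 := (del_red_edges f E).
Local Notation Er0 := (add_blue_edges f E).
Local Notation A := (Ea :\: Ea0).
Local Notation D := (Er0 :\: Er).

Lemma card_added_le Y : edge_set Y -> no_illusion f (Ea0 :|: Y) -> #|A| <= #|Y|.
Proof.
case: opt_a => _ _ _ opt_Ea edge_Y free_Y.
apply: leq_trans (opt_Ea _ _ (subsetUl _ _) free_Y) _.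
  by move=> e; rewrite in_setU in_del_red_edges => /orP[/andP[/edge_E] | /edge_Y].
by rewrite setDUl setDv set0U; apply/subset_leq_card/subsetDl.
Qed.

Lemma card_removed_le Y : no_illusion f (Er0 :\: Y) -> #|D| <= #|Y|.
Proof.
case: opt_r => _ _ opt_Er free_Y.
apply: leq_trans (opt_Er _ (subsetDl _ _) free_Y) _.
by rewrite setDDr setDv set0U; apply/subset_leq_card/subsetIr.
Qed.

Lemma added_blue_pair e : e \in A -> blue_pair e.
Proof.
have [edge_Ea sub_Ea free_Ea _] := opt_a.
set Y := [set e in A | blue_pair e].
have sub_Y : Y \subset A by apply/subsetP => e'; rewrite inE => /andP[].
have edge_Y : edge_set Y by move=> e' /(subsetP sub_Y) /setDP[/edge_Ea].
suff /eqP -> : A == Y by rewrite inE => /andP[].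
rewrite eq_sym eqEcard sub_Y card_added_le // => x.
case: (boolP (f x)) => fx.
  apply: (not_under_illusion_mono_blue fx _ _ (free_Ea x)) => e'.
    by move=> blue_e' e'Ea; rewrite in_setU /Y !inE e'Ea blue_e' !andbT orbN.
  move=> _ _; rewrite in_setU => /orP[/(subsetP sub_Ea)//|/(subsetP sub_Y)].
  by case/setDP.
apply: not_under_illusion_no_red_pair fx _ => e'.
rewrite in_setU in_del_red_edges => /orP[/andP[_ //]|Ye'].
by rewrite blue_pair_not_red ?edge_Y //; move: Ye'; rewrite inE => /andP[].
Qed.

Lemma removed_red_pair e : e \in D -> red_pair e.
Proof.
have [sub_Er free_Er _] := opt_r.
set Y := [set e in D | red_pair e].
have sub_Y : Y \subset D by apply/subsetP => e'; rewrite inE => /andP[].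
suff /eqP -> : D == Y by rewrite inE => /andP[].
rewrite eq_sym eqEcard sub_Y card_removed_le // => x.
case: (boolP (f x)) => fx.
  apply: not_under_illusion_blue_clique fx _ => e' e2 blue_e'.
  by rewrite in_setD in_add_blue_edges e2 blue_e' orbT inE blue_pair_not_red ?andbF.
apply: (not_under_illusion_mono_red fx _ _ (free_Er x)) => e'.
  move=> _ _ e'Er; rewrite in_setD (subsetP sub_Er) // andbT.
  by apply: contraL e'Er => /(subsetP sub_Y) /setDP[].
rewrite in_setD => red_e' /andP[e'Y e'Er0]; apply/negPn/negP => e'Er.
by move: e'Y; rewrite inE in_setD e'Er e'Er0 red_e'.
Qed.

Lemma added_notin e : e \in A -> e \notin E.
Proof.
move=> eA; have [edge_Ea _ _ _] := opt_a.
move: (eA); rewrite in_setD in_del_red_edges => /andP[].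
by rewrite blue_pair_not_red ?added_blue_pair ?andbT // edge_Ea //; case/setDP: eA.
Qed.

Lemma removed_in e : e \in D -> e \in E.
Proof.
move=> eD; move: (eD); rewrite in_setD in_add_blue_edges => /andP[_ /orP[//|]].
by case/andP => /eqP e2 /(blue_pair_not_red e2); rewrite removed_red_pair.
Qed.

Lemma MIE_cost_combined : MIE_cost E ((E :\: D) :|: A) = #|A| + #|D|.
Proof.
rewrite /MIE_cost addnC; set A' := A; set D' := D.
have -> : E :\: ((E :\: D') :|: A') = D'.
  apply/setP => e; rewrite in_setD in_setU in_setD.
  case: (boolP (e \in D')) => eD; last by case: (e \in E); case: (e \in A').
  have eE := removed_in eD; rewrite eE.
  by case: (boolP (e \in A')) => // /added_notin; rewrite eE.
have -> : ((E :\: D') :|: A') :\: E = A'.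
  apply/setP => e; rewrite in_setD in_setU in_setD.
  case: (boolP (e \in A')) => eA; first by rewrite (negbTE (added_notin eA)) orbT.
  by case: (e \in E); case: (e \in D').
by [].
Qed.

Lemma edge_set_combined : edge_set ((E :\: D) :|: A).
Proof.
have [edge_Ea _ _ _] := opt_a.
by move=> e; rewrite in_setU => /orP[/setDP[/edge_E] | /setDP[/edge_Ea]].
Qed.

Lemma no_illusion_combined : no_illusion f ((E :\: D) :|: A).
Proof.
have [edge_Ea sub_Ea free_Ea _] := opt_a; have [sub_Er free_Er _] := opt_r.
move=> x; case: (boolP (f x)) => fx.
  apply: (not_under_illusion_mono_blue fx _ _ (free_Ea x)) => e.
    move=> blue_e eEa; apply/setUP; case: (boolP (e \in Ea0)) => eEa0.
      left; move: eEa0; rewrite in_del_red_edges in_setD => /andP[-> _]; rewrite andbT.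
      by apply/negP => /removed_red_pair; rewrite blue_pair_not_red ?edge_Ea.
    by right; rewrite in_setD eEa0 eEa.
  move=> _ not_red /setUP[/setDP[eE _]|/setDP[//]].
  by apply: (subsetP sub_Ea); rewrite in_del_red_edges eE.
apply: (not_under_illusion_mono_red fx _ _ (free_Er x)) => e.
  move=> not_blue _ eEr; apply/setUP; left; rewrite in_setD.
  move: (subsetP sub_Er _ eEr); rewrite in_add_blue_edges (negbTE not_blue) andbF orbF => ->.
  by rewrite andbT; apply/negP => /setDP[_]; rewrite eEr.
move=> red_e /setUP[/setDP[eE eD]|/setDP[eEa eEa0]].
  by apply/negPn/negP => eEr; move: eD; rewrite in_setD eEr in_add_blue_edges eE.
by move: red_e; rewrite blue_pair_not_red ?added_blue_pair ?edge_Ea // in_setD eEa eEa0.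
Qed.

Lemma card_added_le_well_placed F : edge_set F -> no_illusion f F -> well_placed E F ->
  #|A| <= #|F :\: E|.
Proof.
move=> edge_F free_F [removed_red_F added_blue_F].
apply: card_added_le => [e /setDP[/edge_F]//|x].
case: (boolP (f x)) => fx.
  apply: (not_under_illusion_mono_blue fx _ _ (free_F x)) => e.
    move=> blue_e eF; rewrite in_setU in_setD eF andbT in_del_red_edges.
    by case: (e \in E); rewrite ?blue_pair_not_red ?edge_F.
  move=> _ not_red; rewrite in_setU in_del_red_edges => /orP[/andP[eE _]|/setDP[//]].
  apply/negPn/negP => eF; move: not_red.
  by rewrite removed_red_F // in_setD eF.
apply: not_under_illusion_no_red_pair fx _ => e.
rewrite in_setU in_del_red_edges => /orP[/andP[_ //]|eFE].
by case/setDP: (eFE) => /edge_F e2 _; rewrite blue_pair_not_red ?added_blue_F.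
Qed.

Lemma card_removed_le_well_placed F : no_illusion f F -> well_placed E F ->
  #|D| <= #|E :\: F|.
Proof.
move=> free_F [removed_red_F added_blue_F].
apply: card_removed_le => x; case: (boolP (f x)) => fx.
  apply: not_under_illusion_blue_clique fx _ => e e2 blue_e.
  rewrite in_setD in_add_blue_edges e2 blue_e orbT andbT.
  by apply/negP => /removed_red_F; rewrite blue_pair_not_red.
apply: (not_under_illusion_mono_red fx _ _ (free_F x)) => e.
  move=> not_blue _ eF; rewrite in_setD in_setD eF /= in_add_blue_edges.
  case: (boolP (e \in E)) => // eE; move: not_blue.
  by rewrite added_blue_F // in_setD eE.
move=> red_e; rewrite in_setD in_setD in_add_blue_edges => /andP[eEF].
case/orP=> [eE|/andP[/eqP e2 /(blue_pair_not_red e2)]]; last by rewrite red_e.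
by move: eEF; rewrite eE andbT negbK.
Qed.

End Combination.

End Illusion.

Theorem mainTheorem12 (V : finType) (f : V -> bool) (E Ea Er : {set {set V}}) :
  edge_set E ->
  #|[set v | ~~ f v]| < #|[set v | f v]| ->
  MIAE_opt f (del_red_edges f E) Ea ->
  MIRE_opt f (add_blue_edges f E) Er ->
  let A := Ea :\: del_red_edges f E in
  let D := add_blue_edges f E :\: Er in
  MIE_opt f E ((E :\: D) :|: A) /\
  MIE_cost E ((E :\: D) :|: A) = #|A| + #|D|.
Proof.
move=> edge_E more_blue opt_a opt_r A D; rewrite /A /D.
have cost_eq := MIE_cost_combined more_blue edge_E opt_a opt_r.
split=> //; split.
- exact: (edge_set_combined edge_E opt_a).
- exact: (no_illusion_combined more_blue edge_E opt_a opt_r).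
move=> F edge_F free_F.
have [F' [edge_F' free_F' cost_F'] well_placed_F'] :=
  well_placed_exists more_blue edge_E edge_F free_F.
rewrite cost_eq; apply: leq_trans cost_F'; rewrite /MIE_cost [leqRHS]addnC leq_add //.
  exact: (card_added_le_well_placed edge_E opt_a edge_F' free_F' well_placed_F').
exact: (card_removed_le_well_placed more_blue opt_r free_F' well_placed_F').
Qed.
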